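(* Let $\mathbf{w}=(\mathbf{w}_1,\dots,\mathbf{w}_{d+1})\in\mathbb{R}^{d+1}$ with $\|\mathbf{w}\|_2=1$, $\mathbf{w}_1\le 1/\sqrt2$, $\mathbf{w}_2=\dots=\mathbf{w}_{d+1}$ and $|\mathbf{w}_2|\ge 1/\sqrt{2d}$. If $\epsilon_\infty\ge\frac{2}{d}\epsilon_1$ and $\epsilon_\infty\ge\sqrt{\frac{2}{d}}\,\epsilon_2$, then the $\ell_\infty$-player dominates the $\ell_1$-player and the $\ell_2$-player, i.e. for every $(\mathbf{x},y)$, $1-y\mathbf{w}^\top(\mathbf{x}+\boldsymbol{\delta}_\infty)>1-y\mathbf{w}^\top(\mathbf{x}+\boldsymbol{\delta}_1)$ and $1-y\mathbf{w}^\top(\mathbf{x}+\boldsymbol{\delta}_\infty)>1-y\mathbf{w}^\top(\mathbf{x}+\boldsymbol{\delta}_2)$; in other words, the MAX/MSD training procedure for the soft-SVM model cannot converge.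
   Context: For $\mathbf{x}\in\mathbb{R}^{d+1}$, $y\in\{-1,+1\}$ and weights $\mathbf{w}$, the three players' (optimal) perturbations are $\boldsymbol{\delta}_\infty=-y\epsilon_\infty\operatorname{sign}(\mathbf{w})$, $\boldsymbol{\delta}_1=-y\epsilon_1\mathbf{w}/\|\mathbf{w}\|_1$, $\boldsymbol{\delta}_2=-y\epsilon_2\mathbf{w}/\|\mathbf{w}\|_2$, with budgets $\epsilon_1,\epsilon_2,\epsilon_\infty>0$. The soft-SVM model with MAX/MSD updates at each step the unit-norm weights using only the perturbation that incurs the largest soft-SVM loss $\max(0,1-y\mathbf{w}^\top(\mathbf{x}+\boldsymbol{\delta}))$. *)

From mathcomp Require Import all_boot all_order all_algebra.
Set Implicit Arguments. Unset Strict Implicit. Unset Printing Implicit Defensive.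
Import Order.TTheory GRing.Theory Num.Theory.
Local Open Scope ring_scope.

Section Defs.
Variables (R : rcfType) (n : nat).

Definition dotv (u v : 'rV[R]_n) : R := \sum_i u 0 i * v 0 i.
Definition norm1 (w : 'rV[R]_n) : R := \sum_i `|w 0 i|.
Definition norm2 (w : 'rV[R]_n) : R := Num.sqrt (\sum_i w 0 i ^+ 2).
Definition signv (w : 'rV[R]_n) : 'rV[R]_n := map_mx (fun a => Num.sg a) w.

Definition delta_inf (y e : R) (w : 'rV[R]_n) : 'rV[R]_n := (- (y * e)) *: signv w.
Definition delta_1 (y e : R) (w : 'rV[R]_n) : 'rV[R]_n := (- (y * e) / norm1 w) *: w.
Definition delta_2 (y e : R) (w : 'rV[R]_n) : 'rV[R]_n := (- (y * e) / norm2 w) *: w.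

(* the quantity 1 - y w^T (x + delta) (argument of the soft-SVM hinge loss) *)
Definition svm_margin_loss (w x delta : 'rV[R]_n) (y : R) : R := 1 - y * dotv w (x + delta).
End Defs.

From mathcomp Require Import all_boot all_order all_algebra.
From mathcomp Require Import ring lra.
Set Implicit Arguments. Unset Strict Implicit. Unset Printing Implicit Defensive.
Import Order.TTheory GRing.Theory Num.Theory.
Local Open Scope ring_scope.

(** Against a perturbation [c *: v] the loss grows by [- y * c * w^T v]; for the
three players this is [einf * |w|_1], [e1 * |w|_2^2 / |w|_1] and [e2 * |w|_2].
With [|w|_2 = 1] both comparisons reduce to [|w|_1^2 > d / 2], which holds
because the [d] equal tail coordinates carry at least half of the unit mass.
The bound on the first coordinate of [w] is not needed. *)

Section InnerProduct.
Variables (R : rcfType) (n : nat).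
Implicit Types (u v w : 'rV[R]_n).

Lemma dotv0r u : dotv u 0 = 0.
Proof. by rewrite /dotv big1 // => i _; rewrite mxE mulr0. Qed.

Lemma dotvDr u v v' : dotv u (v + v') = dotv u v + dotv u v'.
Proof. by rewrite /dotv -big_split; apply: eq_bigr => i _; rewrite mxE mulrDr. Qed.

Lemma dotvZr u v c : dotv u (c *: v) = c * dotv u v.
Proof. by rewrite /dotv mulr_sumr; apply: eq_bigr => i _; rewrite mxE mulrCA. Qed.

Lemma dotv_signv w : dotv w (signv w) = norm1 w.
Proof. by apply: eq_bigr => i _; rewrite mxE [in RHS]normrEsg mulrC. Qed.

Lemma norm2_sqr w : norm2 w ^+ 2 = \sum_i w 0 i ^+ 2.
Proof. by rewrite sqr_sqrtr // sumr_ge0 // => i _; apply: sqr_ge0. Qed.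

Lemma dotvv w : dotv w w = norm2 w ^+ 2.
Proof. by rewrite norm2_sqr; apply: eq_bigr => i _; rewrite expr2. Qed.

End InnerProduct.

Section MarginLoss.
Variables (R : rcfType) (n : nat) (w x : 'rV[R]_n) (y : R).
Hypothesis y_sqr : y ^+ 2 = 1.

Lemma svm_margin_loss_oppZ c v :
  svm_margin_loss w x ((- (y * c)) *: v) y = svm_margin_loss w x 0 y + c * dotv w v.
Proof.
rewrite /svm_margin_loss !dotvDr dotvZr dotv0r -[in RHS](mul1r c) -y_sqr; ring.
Qed.

Lemma svm_margin_loss_delta_inf e :
  svm_margin_loss w x (delta_inf y e w) y = svm_margin_loss w x 0 y + e * norm1 w.
Proof. by rewrite svm_margin_loss_oppZ dotv_signv. Qed.

Lemma svm_margin_loss_delta_1 e :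
  svm_margin_loss w x (delta_1 y e w) y
  = svm_margin_loss w x 0 y + e / norm1 w * norm2 w ^+ 2.
Proof. by rewrite /delta_1 mulNr -[y * e / _]mulrA svm_margin_loss_oppZ dotvv. Qed.

(* No hypothesis on [w] is needed: for [w = 0] both sides vanish since [e / 0 = 0]. *)
Lemma svm_margin_loss_delta_2 e :
  svm_margin_loss w x (delta_2 y e w) y = svm_margin_loss w x 0 y + e * norm2 w.
Proof.
rewrite /delta_2 mulNr -[y * e / _]mulrA svm_margin_loss_oppZ dotvv.
have [->|w_neq0] := eqVneq (norm2 w) 0; first by rewrite expr2 !mulr0.
by rewrite expr2 mulrA divfK.
Qed.

End MarginLoss.

Lemma sumr_const_tail (R : rcfType) (d : nat) (w : 'rV[R]_d.+1) (f : R -> R) :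
  (forall i : 'I_d.+1, (0 < i)%N -> w 0 i = w 0 (inord 1)) ->
  \sum_i f (w 0 i) = f (w 0 ord0) + d%:R * f (w 0 (inord 1)).
Proof.
move=> w_tail; rewrite big_ord_recl; congr (_ + _).
rewrite (eq_bigr (fun=> f (w 0 (inord 1)))) => [|i _]; last by rewrite w_tail.
by rewrite sumr_const card_ord mulr_natl.
Qed.

Lemma sqr_le_of_sqrt_mul_le (R : rcfType) (c e f : R) :
  0 <= c -> 0 <= e -> Num.sqrt c * e <= f -> c * e ^+ 2 <= f ^+ 2.
Proof.
move=> c_ge0 e_ge0 le_f.
have f_ge0 : 0 <= f by apply: le_trans le_f; rewrite mulr_ge0 ?sqrtr_ge0.
by rewrite -(sqr_sqrtr c_ge0) -exprMn lerXn2r ?nnegrE ?mulr_ge0 ?sqrtr_ge0.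
Qed.

Lemma mul_sqr_ge1_of_invsqrt_le_norm (R : rcfType) (c b : R) :
  0 < c -> 1 / Num.sqrt c <= `|b| -> 1 <= c * b ^+ 2.
Proof.
move=> c_gt0 le_b; have sc_gt0 : 0 < Num.sqrt c by rewrite sqrtr_gt0.
rewrite -(sqr_sqrtr (ltW c_gt0)) -[b ^+ 2]real_normK ?num_real // -exprMn.
by apply: exprn_ege1; rewrite -ler_pdivrMl // mulr1 -div1r.
Qed.

(* [(p + k q)^2 - k/2 >= k/2 + p^2 (1 - k)], which is positive as [p^2 <= 1/2]. *)
Lemma sqr_add_mul_gt (R : realFieldType) (k p q : R) :
  0 < k -> 0 <= p -> 0 <= q -> p ^+ 2 + k * q ^+ 2 = 1 -> 1 <= 2 * k * q ^+ 2 ->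
  k / 2 < (p + k * q) ^+ 2.
Proof.
move=> k_gt0 p_ge0 q_ge0 pq_unit q_tail.
have cross : 0 <= k * (p * q) by rewrite !mulr_ge0 // ltW.
nra.
Qed.

Section Comparisons.
Variables (R : realFieldType) (k s e e' : R).
Hypotheses (k_gt0 : 0 < k) (s_gt0 : 0 < s) (e'_gt0 : 0 < e') (s_sqr : k / 2 < s ^+ 2).

Lemma div_lt_mul_of_sqr_gt : 2 / k * e <= e' -> e / s < e' * s.
Proof.
move=> le_e'; rewrite ltr_pdivrMr // -mulrA -expr2.
have : e <= e' * (k / 2) by rewrite -invf_div ler_pdivlMr ?divr_gt0 // mulrC.
have : e' * (k / 2) < e' * s ^+ 2 by rewrite ltr_pM2l.
lra.
Qed.

Lemma lt_mul_of_sqr_gt : 2 / k * e ^+ 2 <= e' ^+ 2 -> e < e' * s.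
Proof.
move=> le_e'; have es_gt0 : 0 < e' * s by rewrite mulr_gt0.
have : e ^+ 2 <= e' ^+ 2 * (k / 2) by rewrite -invf_div ler_pdivlMr ?divr_gt0 // mulrC.
have : e' ^+ 2 * (k / 2) < (e' * s) ^+ 2 by rewrite exprMn ltr_pM2l ?exprn_gt0.
nra.
Qed.

End Comparisons.

Theorem lemma6 (R : rcfType) (d : nat) (w : 'rV[R]_(d.+1))
  (e1 e2 einf : R) :
  (0 < d)%N ->
  norm2 w = 1 ->
  w 0 ord0 <= 1 / Num.sqrt 2 ->
  (forall i : 'I_(d.+1), (0 < i)%N -> w 0 i = w 0 (inord 1)) ->
  `|w 0 (inord 1)| >= 1 / Num.sqrt (2 * d%:R) ->
  0 < e1 -> 0 < e2 -> 0 < einf ->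
  einf >= 2 / d%:R * e1 ->
  einf >= Num.sqrt (2 / d%:R) * e2 ->
  forall (x : 'rV[R]_(d.+1)) (y : R), (y = 1 \/ y = -1) ->
    svm_margin_loss w x (delta_inf y einf w) y > svm_margin_loss w x (delta_1 y e1 w) y /\
    svm_margin_loss w x (delta_inf y einf w) y > svm_margin_loss w x (delta_2 y e2 w) y.
Proof.
move=> d_gt0 w_unit _ w_tail b_ge _ e2_gt0 einf_gt0 einf_ge1 einf_ge2 x y y_sign.
have y_sqr : y ^+ 2 = 1 by case: y_sign => ->; rewrite ?sqrrN expr1n.
have k_gt0 : 0 < d%:R :> R by rewrite ltr0n.
have norm1_sqr : d%:R / 2 < norm1 w ^+ 2.
  rewrite /norm1 (sumr_const_tail (fun t => `|t|) w_tail).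
  apply: sqr_add_mul_gt; rewrite ?normr_ge0 // !real_normK ?num_real //.
    by rewrite -(sumr_const_tail (fun t => t ^+ 2) w_tail) -norm2_sqr w_unit expr1n.
  by apply: mul_sqr_ge1_of_invsqrt_le_norm; rewrite ?mulr_gt0.
have norm1_gt0 : 0 < norm1 w.
  have : 0 <= norm1 w by apply: sumr_ge0 => i _.
  nra.
rewrite !svm_margin_loss_delta_inf ?svm_margin_loss_delta_1 ?svm_margin_loss_delta_2 //.
rewrite w_unit expr1n !mulr1 !ltrD2l; split.
  exact: (div_lt_mul_of_sqr_gt k_gt0 norm1_gt0 einf_gt0 norm1_sqr).
apply: (lt_mul_of_sqr_gt k_gt0 norm1_gt0 einf_gt0 norm1_sqr).
by apply: sqr_le_of_sqrt_mul_le => //; [rewrite divr_ge0 ?ler0n | exact: ltW].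
Qed.
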